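(* Let $\mathcal H$ be a Hilbert space of finite dimension $N$, and let $\lambda\mapsto \hat H(\lambda)$ ($\lambda\in\mathbb R$) be a family of Hermitian operators on $\mathcal H$. Let $\lambda:[0,\tau]\to\mathbb R$, $t\mapsto\lambda_t$, be a protocol (regular enough for the equation below to have a solution), and let $U_t$ be the unitary evolution defined by $$ i\hbar\,\frac{\partial}{\partial t}U_t=\hat H(\lambda_t)\,U_t,\qquad U_0=\mathbb 1 .$$ For each $\lambda$, let $\{|\psi_k^\lambda\rangle\}_{k=1}^N$ be an orthonormal eigenbasis of $\hat H(\lambda)$, $\hat H(\lambda)|\psi_k^\lambda\rangle=\varepsilon_k(\lambda)|\psi_k^\lambda\rangle$, labelled so that $\varepsilon_k(\lambda_t)\ge\varepsilon_m(\lambda_t)$ whenever $k>m$, for all $t\in[0,\tau]$ (degeneracies are allowed). For $k\in\{1,\dots,N\}$ let $$A_k(\lambda)=\{q\in\{1,\dots,N\}:\ \varepsilon_q(\lambda)=\varepsilon_k(\lambda)\},\qquad g_k(\lambda)=\operatorname{card}A_k(\lambda),$$ $$\mathcal N_k(\lambda)=\Big[\prod_{q\in A_k(\lambda)} q\Big]^{1/g_k(\lambda)},\qquad \hat S(\lambda)=\sum_{k=1}^N \ln\mathcal N_k(\lambda)\,|\psi_k^\lambda\rangle\langle\psi_k^\lambda| .$$ Suppose there is a probability distribution $\{p_k\}_{k=1}^N$ such that $p_k=p_m$ for all $k,m$ with $m\in A_k(\lambda_0)$, $p_k\le p_m$ whenever $k>m$, and the initial state is $$\rho(0)=\sum_{k=1}^N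 p_k\,|\psi_k^{\lambda_0}\rangle\langle\psi_k^{\lambda_0}| .$$ Let $\rho(t)=U_t\rho(0)U_t^\dagger$ and $S(t)=\operatorname{Tr}\big[\rho(t)\,\hat S(\lambda_t)\big]$. Then $$S(\tau)\ge S(0).$$
   Context: $\hat S(\lambda)$ is called the (quantum) volume entropy operator; $\mathcal N_k(\lambda)$ is the geometric mean of the labels in the degenerate set $A_k(\lambda)$, so that $\ln\mathcal N_k(\lambda)$ is the arithmetic mean of $\ln q$ over $q\in A_k(\lambda)$. In the non-degenerate case $\mathcal N_k(\lambda)=k$. *)

From HB Require Import structures.
From mathcomp Require Import all_boot all_order all_algebra.
From mathcomp Require Import all_classical all_reals all_analysis.
From mathcomp Require Import complex.
Set Implicit Arguments. Unset Strict Implicit. Unset Printing Implicit Defensive.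
Import Order.TTheory GRing.Theory Num.Theory.
Import numFieldNormedType.Exports.
Local Open Scope ring_scope.
Local Open Scope sesquilinear_scope.
Local Open Scope classical_set_scope.

Section Defs.
Variable R : realType.
Local Notation C := (R[i]).

Definition RtoC (x : R) : C := Complex x 0.

Definition hermitian_mx n (A : 'M[C]_n) : Prop := A ^t* = A.

Definition ketbra n (v : 'cV[C]_n) : 'M[C]_n := v *m v ^t*.

Definition mx_is_derive m n (U : R -> 'M[C]_(m, n)) (t : R) (D : 'M[C]_(m, n))
  : Prop :=
  forall i j, is_derive t 1 (fun s => complex.Re (U s i j)) (complex.Re (D i j)) /\
              is_derive t 1 (fun s => complex.Im (U s i j)) (complex.Im (D i j)).

Definition mx_continuous_on m n (U : R -> 'M[C]_(m, n)) (a b : R) : Prop :=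
  forall i j, {within `[a, b], continuous (fun s : R => complex.Re (U s i j))} /\
              {within `[a, b], continuous (fun s : R => complex.Im (U s i j))}.

(* Degenerate set A_k = {q : eps q = eps k}; labels q : 'I_N stand for q+1
   in {1,...,N}. *)
Definition degset N (eps : 'I_N -> R) (k : 'I_N) : {set 'I_N} :=
  [set q | eps q == eps k].

Definition gdeg N (eps : 'I_N -> R) (k : 'I_N) : nat := #|degset eps k|.

Definition geomN N (eps : 'I_N -> R) (k : 'I_N) : R :=
  (\prod_(q in degset eps k) (q.+1)%:R) `^ ((gdeg eps k)%:R)^-1.

Definition Shat N (eps : 'I_N -> R) (psi : 'I_N -> 'cV[C]_N) : 'M[C]_N :=
  \sum_(k < N) RtoC (ln (geomN eps k)) *: ketbra (psi k).

End Defs.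

(* The Schrödinger equation with a Hermitian generator makes the derivative of
   U^* U vanish, so U(tau) is unitary and the transition probabilities
   T_km = |<psi_k(lambda_tau)| U(tau) |psi_m(lambda_0)>|^2 form a doubly
   stochastic matrix, with S(tau) = sum_k (T p)_k ln N_k(lambda_tau) and
   S(0) = sum_k p_k ln N_k(lambda_0).  Averaging over degenerate sets is another
   doubly stochastic matrix B with sum_k x_k ln N_k = sum_q ln q (B x)_q, and
   B p = p at lambda_0.  The claim becomes sum_q ln q p_q <= sum_q ln q (D p)_q
   for D = B T doubly stochastic: since p is nonincreasing, every tail sum of
   D p dominates the corresponding tail sum of p, and Abel summation against
   the nondecreasing weights ln q concludes. *)

From HB Require Import structures.
From mathcomp Require Import all_boot all_order all_algebra.
From mathcomp Require Import all_classical all_reals all_analysis.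
From mathcomp Require Import complex.
From mathcomp Require Import ring lra.
Set Implicit Arguments. Unset Strict Implicit. Unset Printing Implicit Defensive.
Import Order.TTheory GRing.Theory Num.Theory.
Import numFieldNormedType.Exports.
Local Open Scope ring_scope.
Local Open Scope sesquilinear_scope.

Section Majorization.
Variable R : realFieldType.

Definition doubly_stochastic n (D : 'M[R]_n) : Prop :=
  [/\ forall i j, 0 <= D i j, forall i, \sum_j D i j = 1 & forall j, \sum_i D i j = 1].

Lemma doubly_stochasticM n (A B : 'M[R]_n) :
  doubly_stochastic A -> doubly_stochastic B -> doubly_stochastic (A *m B).
Proof.
move=> [A0 Arow Acol] [B0 Brow Bcol]; split=> [i j|i|j].
- by rewrite mxE sumr_ge0 // => k _; rewrite mulr_ge0.
- under eq_bigr do rewrite mxE; rewrite exchange_big /=.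
  by under eq_bigr do rewrite -mulr_sumr Brow mulr1; apply: Arow.
- under eq_bigr do rewrite mxE; rewrite exchange_big /=.
  by under eq_bigr do rewrite -mulr_suml Acol mul1r; apply: Bcol.
Qed.

Lemma big_tail_recl n (F : 'I_n -> R) (j : nat) :
  \sum_(q < n | (j <= q)%N) F q =
  \sum_(q < n | q == j :> nat) F q + \sum_(q < n | (j < q)%N) F q.
Proof.
rewrite (bigID (fun q : 'I_n => q == j :> nat)) /=; congr (_ + _).
  by apply: eq_bigl => q; case: eqP => [->|]; rewrite ?leqnn ?andbF.
by apply: eq_bigl => q; rewrite ltn_neqAle eq_sym andbC.
Qed.

Lemma abel_tail_lower_bound n (a : nat -> R) (x : 'I_n -> R) :
  {homo a : i j / (i <= j)%N >-> i <= j} ->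
  (forall j, 0 <= \sum_(q < n | (j <= q)%N) x q) ->
  forall j, a j * \sum_(q < n | (j <= q)%N) x q <= \sum_(q < n | (j <= q)%N) a q * x q.
Proof.
move=> a_mono x_tail j; have [k] := ubnP (n - j); elim: k j => [//|k IHk] j.
rewrite ltnS => n_j; have [j_lt_n|n_le_j] := ltnP j n; last first.
  have no_tail (q : 'I_n) : (j <= q)%N = false.
    by apply/negbTE; rewrite -ltnNge (leq_trans (ltn_ord q)).
  by rewrite !big_pred0 ?mulr0.
have {}IHk := IHk j.+1 (leq_trans (ltn_sub2l j_lt_n (ltnSn j)) n_j).
rewrite big_tail_recl [leRHS]big_tail_recl mulrDr lerD //.
  by rewrite mulr_sumr (eq_bigr (fun q : 'I_n => a q * x q)) // => q /eqP ->.
by apply: le_trans IHk; rewrite ler_wpM2r ?x_tail ?a_mono.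
Qed.

Section Tails.
Variables (n : nat) (D : 'M[R]_n) (p : 'I_n -> R).
Hypothesis D_ds : doubly_stochastic D.
Hypothesis p_noninc : forall k m : 'I_n, (m < k)%N -> p k <= p m.

Lemma tail_sum_le_doubly_stochastic j :
  \sum_(q < n | (j <= q)%N) p q <= \sum_(q < n | (j <= q)%N) \sum_m D q m * p m.
Proof.
have [D0 Drow Dcol] := D_ds.
have [j_lt_n|n_le_j] := ltnP j n; last first.
  have no_tail (q : 'I_n) : (j <= q)%N = false.
    by apply/negbTE; rewrite -ltnNge (leq_trans (ltn_ord q)).
  by rewrite !big_pred0.
(* With c m the mass D sends to the tail and t := p j, every term of
   sum_m (c m - [j <= m]) (p m - t) is nonnegative, and c has the same total
   mass as the indicator of the tail. *)
pose t := p (Ordinal j_lt_n).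
pose tail (m : 'I_n) : R := (j <= m)%N%:R.
pose c m := \sum_(q < n | (j <= q)%N) D q m.
have lhsE : \sum_(q < n | (j <= q)%N) p q = \sum_m tail m * p m.
  rewrite big_mkcond; apply: eq_bigr => m _.
  by rewrite /tail; case: (j <= m)%N; rewrite ?mul1r ?mul0r.
have rhsE : \sum_(q < n | (j <= q)%N) \sum_m D q m * p m = \sum_m c m * p m.
  by rewrite exchange_big; apply: eq_bigr => m _; rewrite mulr_suml.
have c_sum : \sum_m c m = \sum_m tail m.
  rewrite exchange_big /= (eq_bigr (fun=> 1)) // big_mkcond.
  by apply: eq_bigr => m _; rewrite /tail; case: (j <= m)%N.
have c_ge0 m : 0 <= c m by apply: sumr_ge0.
have c_le1 m : c m <= 1.
  rewrite -(Dcol m) [leRHS](bigID (fun q : 'I_n => (j <= q)%N)) /= lerDl.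
  exact: sumr_ge0.
have term_ge0 m : 0 <= (c m - tail m) * (p m - t).
  rewrite /tail; have [j_le_m|m_lt_j] := leqP j m.
    have : p m <= t.
      have [j_lt_m|] := ltnP j m; first exact: p_noninc.
      move=> m_le_j; rewrite /t (_ : Ordinal j_lt_n = m) //.
      by apply: val_inj; apply/eqP; rewrite /= eqn_leq j_le_m m_le_j.
    by move: (c_le1 m); rewrite mulr1n => ? ?; apply: mulr_le0; lra.
  have : t <= p m by apply: p_noninc.
  by move: (c_ge0 m); rewrite mulr0n => ? ?; apply: mulr_ge0; lra.
rewrite lhsE rhsE -subr_ge0 -sumrB.
have -> : \sum_m (c m * p m - tail m * p m) =
    \sum_m (c m - tail m) * (p m - t) + t * (\sum_m c m - \sum_m tail m).
  by rewrite -sumrB mulr_sumr -big_split /=; apply: eq_bigr => m _; ring.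
by rewrite c_sum subrr mulr0 addr0 sumr_ge0.
Qed.

Lemma doubly_stochastic_majorization (a : nat -> R) :
  {homo a : i j / (i <= j)%N >-> i <= j} ->
  \sum_(q < n) a q * p q <= \sum_(q < n) a q * \sum_m D q m * p m.
Proof.
have [_ _ Dcol] := D_ds.
move=> a_mono; pose x q := \sum_m D q m * p m - p q.
have x_tail j : 0 <= \sum_(q < n | (j <= q)%N) x q.
  by rewrite sumrB subr_ge0 tail_sum_le_doubly_stochastic.
have x_sum : \sum_(q < n | (0 <= q)%N) x q = 0.
  rewrite (eq_bigl xpredT) // sumrB exchange_big /=; apply/eqP; rewrite subr_eq0.
  by apply/eqP/eq_bigr => m _; rewrite -mulr_suml Dcol mul1r.
have := abel_tail_lower_bound a_mono x_tail 0.
rewrite x_sum mulr0 (eq_bigl xpredT) // /x.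
by under eq_bigr do rewrite mulrBr; rewrite sumrB subr_ge0.
Qed.

End Tails.
End Majorization.

Lemma ln_prod (R : realType) (I : Type) (r : seq I) (P : pred I) (F : I -> R) :
  (forall i, P i -> 0 < F i) ->
  ln (\prod_(i <- r | P i) F i) = \sum_(i <- r | P i) ln (F i).
Proof.
move=> F_gt0.
suff [] : 0 < \prod_(i <- r | P i) F i /\
          ln (\prod_(i <- r | P i) F i) = \sum_(i <- r | P i) ln (F i) by [].
apply: (big_rec2 (fun s y => 0 < y /\ ln y = s)); first by rewrite ln1.
move=> i s y Pi [y_gt0 <-].
by rewrite mulr_gt0 ?F_gt0 // lnM ?posrE ?F_gt0.
Qed.

Section DegenerateAveraging.
Variables (R : realType) (n : nat) (e : 'I_n -> R).

Definition degavgmx : 'M[R]_n :=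
  \matrix_(q < n, k < n) ((k \in degset e q)%:R / (gdeg e q)%:R).

Lemma degset_sym q k : (k \in degset e q) = (q \in degset e k).
Proof. by rewrite !inE eq_sym. Qed.

Lemma gdeg_gt0 k : (0 < gdeg e k)%N.
Proof. by apply/card_gt0P; exists k; rewrite inE. Qed.

Lemma degavgmxC q k : degavgmx q k = degavgmx k q.
Proof.
rewrite !mxE (degset_sym q k); have [|_] := boolP (q \in degset e k); last first.
  by rewrite !mul0r.
rewrite inE => /eqP e_qk; congr (_ / _%:R); apply: eq_card => r.
by rewrite !inE e_qk.
Qed.

Lemma ln_geomN k :
  ln (geomN e k) = (gdeg e k)%:R^-1 * \sum_(q in degset e k) ln (q.+1)%:R.
Proof. by rewrite ln_powR ln_prod // => q _; rewrite ltr0n. Qed.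

Lemma degavgmx_doubly_stochastic : doubly_stochastic degavgmx.
Proof.
have row_sum q : \sum_k degavgmx q k = 1.
  under eq_bigr do rewrite mxE; rewrite -mulr_suml -natr_sum.
  rewrite [X in X%:R / _](_ : _ = gdeg e q); last first.
    by rewrite /gdeg -sum1_card [RHS]big_mkcond.
  by rewrite mulfV // pnatr_eq0 -lt0n gdeg_gt0.
split=> // [q k|k]; first by rewrite mxE divr_ge0.
by under eq_bigr do rewrite degavgmxC; apply: row_sum.
Qed.

Lemma sum_ln_geomN (x : 'I_n -> R) :
  \sum_k x k * ln (geomN e k) = \sum_(q < n) ln (q.+1)%:R * \sum_k degavgmx q k * x k.
Proof.
under eq_bigr do rewrite ln_geomN big_mkcond mulr_sumr mulr_sumr.
rewrite exchange_big; apply: eq_bigr => q _; rewrite mulr_sumr.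
apply: eq_bigr => k _; rewrite degavgmxC mxE.
by case: (q \in degset e k); rewrite ?mul0r ?mulr0 //= mulr1n; ring.
Qed.

Lemma degavgmx_const (p : 'I_n -> R) :
  (forall k m : 'I_n, m \in degset e k -> p k = p m) ->
  forall q, \sum_k degavgmx q k * p k = p q.
Proof.
move=> p_const q; have [_ row_sum _] := degavgmx_doubly_stochastic.
rewrite -[RHS]mul1r -(row_sum q) mulr_suml; apply: eq_bigr => k _.
by rewrite mxE; have [/p_const ->|_] := boolP (k \in degset e q); rewrite ?mul0r.
Qed.

End DegenerateAveraging.

Lemma sum_ln_geomN_le_doubly_stochastic (R : realType) n (e0 e : 'I_n -> R)
    (T : 'M[R]_n) (p : 'I_n -> R) :
  doubly_stochastic T ->
  (forall k m : 'I_n, m \in degset e0 k -> p k = p m) ->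
  (forall k m : 'I_n, (m < k)%N -> p k <= p m) ->
  \sum_k p k * ln (geomN e0 k) <= \sum_k (\sum_m T k m * p m) * ln (geomN e k).
Proof.
move=> T_ds p_const p_noninc; rewrite !sum_ln_geomN.
under eq_bigr do rewrite degavgmx_const //.
have DT_ds := doubly_stochasticM (degavgmx_doubly_stochastic e) T_ds.
have -> : \sum_(q < n) ln (q.+1)%:R * \sum_k degavgmx e q k * \sum_m T k m * p m =
          \sum_(q < n) ln (q.+1)%:R * \sum_m (degavgmx e *m T) q m * p m.
  apply: eq_bigr => q _; congr (_ * _).
  under [RHS]eq_bigr do rewrite mxE mulr_suml; rewrite exchange_big /=.
  by apply: eq_bigr => k _; rewrite mulr_sumr; apply: eq_bigr => m _; rewrite mulrA.
apply: (doubly_stochastic_majorization DT_ds p_noninc (a := fun i => ln i.+1%:R)) => i j ij.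
by rewrite ler_ln ?posrE ?ltr0n // ler_nat.
Qed.

Section Transition.
Variable R : realType.
Local Notation C := R[i].

Lemma RtoC_sum (I : Type) (r : seq I) (P : pred I) (F : I -> R) :
  RtoC (\sum_(i <- r | P i) F i) = \sum_(i <- r | P i) RtoC (F i).
Proof. exact: (rmorph_sum (real_complex R)). Qed.

Lemma RtoCM (x y : R) : RtoC (x * y) = RtoC x * RtoC y.
Proof. exact: (rmorphM (real_complex R)). Qed.

Lemma RtoC_inj : injective (@RtoC R).
Proof. exact: (@complexI R). Qed.

Lemma RtoC1 : RtoC 1 = 1 :> C.
Proof. by []. Qed.

Lemma ler_RtoC (x y : R) : (RtoC x <= RtoC y) = (x <= y).
Proof. exact: lecR. Qed.

Definition sqnorm (z : C) : R := complex.Re z ^+ 2 + complex.Im z ^+ 2.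

Lemma sqnorm_ge0 z : 0 <= sqnorm z.
Proof. by rewrite addr_ge0 ?sqr_ge0. Qed.

Lemma RtoC_sqnorm z : RtoC (sqnorm z) = z * z^*.
Proof. by rewrite -normCK -add_Re2_Im2. Qed.

Definition basismx m n (f : 'I_n -> 'cV[C]_m) : 'M[C]_(m, n) := \matrix_(i, k) f k i 0.

Lemma basismx_unitary m n (f : 'I_n -> 'cV[C]_m) :
  (forall k l, f k ^t* *m f l = (k == l)%:R%:M) -> (basismx f)^t* \is unitarymx.
Proof.
move=> f_on; apply/unitarymxP; rewrite trmxCK; apply/matrixP => k l.
have := congr1 (fun A : 'M[C]_1 => A 0 0) (f_on k l); rewrite !mxE mulr1n => <-.
by apply: eq_bigr => i _; rewrite !mxE.
Qed.

Lemma sum_ketbra m n (c : 'I_n -> C) (f : 'I_n -> 'cV[C]_m) :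
  \sum_k c k *: ketbra (f k) = basismx f *m diag_mx (\row_k c k) *m (basismx f)^t*.
Proof.
apply/matrixP => i j; rewrite summxE !mxE; apply: eq_bigr => k _.
by rewrite mul_mx_diag !mxE big_ord1 !mxE mulrCA mulrA.
Qed.

Definition transmx n (W : 'M[C]_n) : 'M[R]_n := \matrix_(k, m) sqnorm (W k m).

Lemma transmx1 n : transmx (1%:M : 'M[C]_n) = 1%:M.
Proof.
apply/matrixP => k m; rewrite !mxE /sqnorm.
by case: (k == m); rewrite /= ?expr0n /= ?addr0 ?expr1n.
Qed.

Lemma transmx_doubly_stochastic n (W : 'M[C]_n) :
  W \is unitarymx -> doubly_stochastic (transmx W).
Proof.
move=> /unitarymxP W_unitary; have W'_unitary := mulmx1C W_unitary.
split=> [k m|k|m]; rewrite ?mxE ?sqnorm_ge0 //; apply: RtoC_inj; rewrite RtoC_sum RtoC1.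
- have := congr1 (fun A : 'M[C]_n => A k k) W_unitary.
  rewrite !mxE eqxx mulr1n => <-.
  by apply: eq_bigr => m _; rewrite !mxE RtoC_sqnorm.
- have := congr1 (fun A : 'M[C]_n => A m m) W'_unitary.
  rewrite !mxE eqxx mulr1n => <-.
  by apply: eq_bigr => k _; rewrite !mxE RtoC_sqnorm mulrC.
Qed.

Lemma mxtrace_diag_sandwich n (W : 'M[C]_n) (a b : 'rV[C]_n) :
  \tr (W *m diag_mx a *m W^t* *m diag_mx b) =
  \sum_k b 0 k * \sum_m a 0 m * (W k m * (W k m)^*).
Proof.
apply: eq_bigr => k _; rewrite mul_mx_diag -mulmxA mul_diag_mx !mxE mulrC.
by congr (_ * _); apply: eq_bigr => m _; rewrite !mxE mulrCA.
Qed.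

Lemma mxtrace_change_basis m n (V : 'M[C]_m) (F G : 'M[C]_(m, n)) (A B : 'M[C]_n) :
  let W := F^t* *m V *m G in
  \tr (V *m (G *m A *m G^t*) *m V^t* *m (F *m B *m F^t*)) = \tr (W *m A *m W^t* *m B).
Proof. by rewrite /= mulmxA mxtrace_mulC !mulmxA !trmx_mul !map_mxM trmxCK !mulmxA. Qed.

Lemma trace_state_Shat n (V : 'M[C]_n) (g f : 'I_n -> 'cV[C]_n) (p e : 'I_n -> R) :
  let W := (basismx f)^t* *m V *m basismx g in
  \tr (V *m (\sum_m RtoC (p m) *: ketbra (g m)) *m V^t* *m Shat e f) =
  RtoC (\sum_k (\sum_m transmx W k m * p m) * ln (geomN e k)).
Proof.
rewrite /Shat !sum_ketbra mxtrace_change_basis mxtrace_diag_sandwich RtoC_sum.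
apply: eq_bigr => k _.
rewrite mxE RtoCM mulrC RtoC_sum; congr (_ * _); apply: eq_bigr => m _.
by rewrite !mxE RtoCM RtoC_sqnorm mulrC.
Qed.

Lemma trace_state_Shat_orthonormal n (f : 'I_n -> 'cV[C]_n) (p e : 'I_n -> R) :
  (forall k l, f k ^t* *m f l = (k == l)%:R%:M) ->
  \tr ((\sum_m RtoC (p m) *: ketbra (f m)) *m Shat e f) =
  RtoC (\sum_k p k * ln (geomN e k)).
Proof.
move=> f_on; have := trace_state_Shat 1%:M f f p e.
rewrite mul1mx trmx1 map_mx1 !mulmx1 => ->; congr RtoC.
have /unitarymxP := basismx_unitary f_on; rewrite trmxCK => ->.
apply: eq_bigr => k _; rewrite transmx1 (bigD1 k) //= big1 => [|m m_neq_k].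
  by rewrite mxE eqxx mul1r addr0.
by rewrite mxE eq_sym (negbTE m_neq_k) mul0r.
Qed.

End Transition.

Section ComplexCalculus.
Variable R : realType.
Local Notation C := R[i].
Local Notation Re := (@complex.Re R).
Local Notation Im := (@complex.Im R).
Local Open Scope classical_set_scope.

Lemma Re_sum n (F : 'I_n -> C) : Re (\sum_k F k) = \sum_k Re (F k).
Proof. exact: (raddf_sum (@complex.Re R : Rcomplex R -> R)). Qed.

Lemma Im_sum n (F : 'I_n -> C) : Im (\sum_k F k) = \sum_k Im (F k).
Proof. exact: (raddf_sum (@complex.Im R : Rcomplex R -> R)). Qed.

Lemma Re_conjM (a b : C) : Re (a^* * b) = Re a * Re b + Im a * Im b.
Proof. by case: a => a1 a2; case: b => b1 b2; simpc. Qed.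

Lemma Im_conjM (a b : C) : Im (a^* * b) = Re a * Im b - Im a * Re b.
Proof. by case: a => a1 a2; case: b => b1 b2; simpc. Qed.

Definition cderive (u : R -> C) (x : R) (du : C) : Prop :=
  is_derive x 1 (fun s => Re (u s)) (Re du) /\ is_derive x 1 (fun s => Im (u s)) (Im du).

Definition ccontinuous_on (u : R -> C) (a b : R) : Prop :=
  {within `[a, b], continuous (fun s => Re (u s))} /\
  {within `[a, b], continuous (fun s => Im (u s))}.

Lemma cderive_conjM u v x du dv : cderive u x du -> cderive v x dv ->
  cderive (fun s => (u s)^* * v s) x (du^* * v x + (u x)^* * dv).
Proof.
move=> [ur ui] [vr vi]; split.
- have -> : (fun s => Re ((u s)^* * v s)) =
    (fun s => Re (u s)) * (fun s => Re (v s)) + (fun s => Im (u s)) * (fun s => Im (v s)).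
    by apply: funext => s /=; rewrite Re_conjM.
  apply: is_derive_eq (is_deriveD (is_deriveM ur vr) (is_deriveM ui vi)) _.
  by rewrite (raddfD (@complex.Re R : Rcomplex R -> R)) /= !Re_conjM /GRing.scale /=; ring.
- have -> : (fun s => Im ((u s)^* * v s)) =
    (fun s => Re (u s)) * (fun s => Im (v s)) - (fun s => Im (u s)) * (fun s => Re (v s)).
    by apply: funext => s /=; rewrite Im_conjM.
  apply: is_derive_eq (is_deriveB (is_deriveM ur vi) (is_deriveM ui vr)) _.
  by rewrite (raddfD (@complex.Im R : Rcomplex R -> R)) /= !Im_conjM /GRing.scale /=; ring.
Qed.

Lemma cderive_sum n (u : 'I_n -> R -> C) x (du : 'I_n -> C) :
  (forall k, cderive (u k) x (du k)) -> cderive (fun s => \sum_k u k s) x (\sum_k du k).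
Proof.
move=> u_der; split.
- have -> : (fun s => Re (\sum_k u k s)) = \sum_k (fun s => Re (u k s)).
    by rewrite fct_sumE; apply: funext => s; rewrite Re_sum.
  by rewrite Re_sum; apply: is_derive_sum => k; apply: (u_der k).1.
- have -> : (fun s => Im (\sum_k u k s)) = \sum_k (fun s => Im (u k s)).
    by rewrite fct_sumE; apply: funext => s; rewrite Im_sum.
  by rewrite Im_sum; apply: is_derive_sum => k; apply: (u_der k).2.
Qed.

Lemma within_continuousM (A : set R) (f g : R -> R) :
  {within A, continuous f} -> {within A, continuous g} -> {within A, continuous (f * g)}.
Proof. by move=> f_cont g_cont x; exact: continuousM (f_cont x) (g_cont x). Qed.

Lemma within_continuous_sum (A : set R) n (f : 'I_n -> R -> R) :
  (forall k, {within A, continuous f k}) -> {within A, continuous (\sum_k f k)}.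
Proof.
move=> f_cont; apply: (big_ind (fun g : R -> R => {within A, continuous g})) => //.
- by move=> x; apply: cst_continuous.
- by move=> g h; apply: within_continuousD.
Qed.

Lemma ccontinuous_conjM u v a b : ccontinuous_on u a b -> ccontinuous_on v a b ->
  ccontinuous_on (fun s => (u s)^* * v s) a b.
Proof.
move=> [ur ui] [vr vi]; split.
- have -> : (fun s => Re ((u s)^* * v s)) =
    (fun s => Re (u s)) * (fun s => Re (v s)) + (fun s => Im (u s)) * (fun s => Im (v s)).
    by apply: funext => s /=; rewrite Re_conjM.
  by apply: within_continuousD; apply: within_continuousM.
- have -> : (fun s => Im ((u s)^* * v s)) =
    (fun s => Re (u s)) * (fun s => Im (v s)) - (fun s => Im (u s)) * (fun s => Re (v s)).
    by apply: funext => s /=; rewrite Im_conjM.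
  by apply: within_continuousB; apply: within_continuousM.
Qed.

Lemma ccontinuous_sum n (u : 'I_n -> R -> C) a b :
  (forall k, ccontinuous_on (u k) a b) -> ccontinuous_on (fun s => \sum_k u k s) a b.
Proof.
move=> u_cont; split.
- have -> : (fun s => Re (\sum_k u k s)) = \sum_k (fun s => Re (u k s)).
    by rewrite fct_sumE; apply: funext => s; rewrite Re_sum.
  by apply: within_continuous_sum => k; apply: (u_cont k).1.
- have -> : (fun s => Im (\sum_k u k s)) = \sum_k (fun s => Im (u k s)).
    by rewrite fct_sumE; apply: funext => s; rewrite Im_sum.
  by apply: within_continuous_sum => k; apply: (u_cont k).2.
Qed.

Lemma cderive0_cst (u : R -> C) (tau : R) : 0 <= tau -> ccontinuous_on u 0 tau ->
  (forall x, 0 < x < tau -> cderive u x 0) -> u tau = u 0.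
Proof.
move=> tau_ge0 [ur ui] u_der; have [-> //|tau_neq0] := eqVneq tau 0.
have tau_gt0 : 0 < tau by rewrite lt_neqAle eq_sym tau_neq0.
have MVT0 (f : R -> R) : {within `[0, tau], continuous f} ->
    (forall x, x \in `]0, tau[%R -> is_derive x 1 f 0) -> f tau = f 0.
  move=> f_cont f_der; have [c _] := MVT tau_gt0 f_der f_cont.
  by rewrite mul0r => /eqP; rewrite subr_eq0 => /eqP.
apply/eqP; rewrite eq_complex; apply/andP; split; apply/eqP.
- by apply: (MVT0 (fun s => Re (u s))) => // x; rewrite in_itv /= => /u_der [].
- by apply: (MVT0 (fun s => Im (u s))) => // x; rewrite in_itv /= => /u_der [].
Qed.

End ComplexCalculus.

Section UnitaryEvolution.
Variable R : realType.
Local Notation C := R[i].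

Lemma trmxC_scale m n (a : C) (A : 'M[C]_(m, n)) : (a *: A)^t* = a^* *: A^t*.
Proof. by apply/matrixP => i j; rewrite !mxE rmorphM. Qed.

Lemma adjoint_derivative_skew n (c : C) (Hm V D : 'M[C]_n) :
  c != 0 -> c^* = - c -> Hm^t* = Hm -> c *: D = Hm *m V ->
  D^t* *m V + V^t* *m D = 0.
Proof.
move=> c_neq0 c_skew Hm_herm D_eq.
have -> : D = c^-1 *: (Hm *m V) by rewrite -D_eq scalerA mulVf // scale1r.
have cV_skew : (c^-1)^* = - c^-1 by rewrite -invrN -c_skew; apply: fmorphV.
rewrite trmxC_scale trmx_mul map_mxM Hm_herm cV_skew.
by rewrite -scalemxAl -scalemxAr mulmxA scaleNr addNr.
Qed.

Lemma gram_entryE n (A B : 'M[C]_n) i j : (A^t* *m B) i j = \sum_k (A k i)^* * B k j.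
Proof. by rewrite mxE; apply: eq_bigr => k _; rewrite !mxE. Qed.

Lemma gram_entry_cderive n (U : R -> 'M[C]_n) x D i j : mx_is_derive U x D ->
  cderive (fun s => (U s ^t* *m U s) i j) x ((D^t* *m U x + U x ^t* *m D) i j).
Proof.
move=> U_der; rewrite mxE !gram_entryE -big_split /=.
under eq_fun do rewrite gram_entryE.
by apply: cderive_sum => k; apply: cderive_conjM; apply: U_der.
Qed.

Lemma gram_entry_ccontinuous n (U : R -> 'M[C]_n) a b i j : mx_continuous_on U a b ->
  ccontinuous_on (fun s => (U s ^t* *m U s) i j) a b.
Proof.
move=> U_cont; under eq_fun do rewrite gram_entryE.
by apply: ccontinuous_sum => k; apply: ccontinuous_conjM; apply: U_cont.
Qed.

Lemma unitary_evolution n (hbar tau : R) (Ht U : R -> 'M[C]_n) :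
  0 < hbar -> 0 <= tau -> (forall t, 0 < t < tau -> hermitian_mx (Ht t)) ->
  U 0 = 1%:M -> mx_continuous_on U 0 tau ->
  (forall t, 0 < t < tau -> exists D,
     mx_is_derive U t D /\ (Complex 0 1 * RtoC hbar) *: D = Ht t *m U t) ->
  U tau \is unitarymx.
Proof.
move=> hbar_gt0 tau_ge0 Ht_herm U0 U_cont U_der.
set c := Complex 0 1 * RtoC hbar.
have c_neq0 : c != 0.
  by rewrite eq_complex /= !mul0r !mul1r subr0 add0r eqxx (gt_eqF hbar_gt0).
have c_skew : c^* = - c.
  by apply/eqP; rewrite eq_complex /= !mul0r !mul1r subr0 oppr0 !eqxx.
apply/unitarymxP/mulmx1C; rewrite -[RHS](_ : U 0 ^t* *m U 0 = 1%:M); last first.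
  by rewrite U0 trmx1 map_mx1 mulmx1.
apply/matrixP => i j; apply: (cderive0_cst tau_ge0 (gram_entry_ccontinuous i j U_cont)).
move=> x x_in; have [D [D_der D_eq]] := U_der x x_in.
have := gram_entry_cderive i j D_der.
by rewrite (adjoint_derivative_skew c_neq0 c_skew (Ht_herm x x_in) D_eq) mxE.
Qed.

End UnitaryEvolution.

Theorem theorem2 (R : realType) (N : nat) (hbar tau : R)
  (H : R -> 'M[R[i]]_N) (lam : R -> R) (U : R -> 'M[R[i]]_N)
  (psi : R -> 'I_N -> 'cV[R[i]]_N) (eps : R -> 'I_N -> R) (p : 'I_N -> R) :
  0 < hbar -> 0 <= tau ->
  (forall l, hermitian_mx (H l)) ->
  (forall l (k m : 'I_N), (psi l k) ^t* *m psi l m = (k == m)%:R%:M) ->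
  (forall l k, H l *m psi l k = RtoC (eps l k) *: psi l k) ->
  (forall t, 0 <= t <= tau ->
     forall k m : 'I_N, (m < k)%N -> eps (lam t) m <= eps (lam t) k) ->
  U 0 = 1%:M ->
  mx_continuous_on U 0 tau ->
  (forall t, 0 < t < tau -> exists D,
     mx_is_derive U t D /\ (Complex 0 1 * RtoC hbar) *: D = H (lam t) *m U t) ->
  (forall k, 0 <= p k) -> \sum_(k < N) p k = 1 ->
  (forall k m : 'I_N, m \in degset (eps (lam 0)) k -> p k = p m) ->
  (forall k m : 'I_N, (m < k)%N -> p k <= p m) ->
  let rho0 := \sum_(k < N) RtoC (p k) *: ketbra (psi (lam 0) k) in
  let rho := fun t => U t *m rho0 *m (U t) ^t* in
  let S := fun t => \tr (rho t *m Shat (eps (lam t)) (psi (lam t))) in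
  S 0 <= S tau.
Proof.
move=> hbar_gt0 tau_ge0 H_herm psi_on _ _ U0 U_cont U_der _ _ p_const p_noninc /=.
have U_unitary : U tau \is unitarymx.
  by apply: (unitary_evolution hbar_gt0 tau_ge0 _ U0 U_cont U_der) => t _.
rewrite U0 mul1mx trmx1 map_mx1 mulmx1 trace_state_Shat_orthonormal //.
rewrite trace_state_Shat ler_RtoC.
apply: sum_ln_geomN_le_doubly_stochastic => //; apply: transmx_doubly_stochastic.
by rewrite !mul_unitarymx // ?basismx_unitary // -trmxC_unitary basismx_unitary.
Qed.
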